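(* Let $G=(V,E)$ be a directed graph with a partition of $V$ into disjoint regions $R_1,\dots,R_k$, let $f\in\mathbb{N}$, $\ell=2f+1$, $V'=V\times[\ell]$, $v_i=(v,i)$, $P(v_i)=v$, and $E'=\bigcup_{e\in E}E'_e$ where for $e=(v,w)\in E$, $E'_e=\{(v_i,w_i): i\in[\ell]\}$ if $v,w$ lie in the same region and $E'_e=\{(v_i,w_j): i,j\in[\ell]\}$ otherwise. For $v'\in V'$ and $(w,P(v'))\in E$ let $N_{v'}(w)=\{w'\in V': P(w')=w,\ (w',v')\in E'\}$. Let $A$ be a scheduling algorithm on $G$ and $A'$ the algorithm in which each non-faulty $v'\in V'$: (1) initializes local copies of the state variables of $P(v')$ as in $A$; (2) in each round sends on each link $(v',w')\in E'$ the message $P(v')$ would send on $(P(v'),P(w'))$ under $A$ according to its local state; (3) updates its state in each round as if $P(v')$ received, for each $(w,P(v'))\in E$, the message sent by the majority of the nodes in $N_{v'}(w)$. Let $F'\subseteq V'$ be a set of Byzantine nodes such that for each $k'\in[k]$ there are at least $f+1$ indices $i\in[\ell]$ with $\{v_i:v\in R_{k'}\}\cap F'=\emptyset$. Then $A'$ simulates $A$: assuming each non-faulty $v'$ receives the same environment input as $P(v')$, for each $v\in V$ a strict majority of its copies $v_1,\dots,v_\ell$ compute in every round the state of $v$ in the fault-free execution of $A$ on $G$.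
   Context: Networks are synchronous directed graphs running a scheduling algorithm (each round: send messages on outgoing links based on state, then update state from received messages and environment input). Byzantine faulty nodes may behave arbitrarily. $[\ell]=\{1,\dots,\ell\}$. *)

From mathcomp Require Import all_boot.
Set Implicit Arguments. Unset Strict Implicit. Unset Printing Implicit Defensive.

(* ell = 2f+1; the index set [ell] is modelled as 'I_(ell f) = {0,...,2f} *)
Definition ell (f : nat) : nat := (2 * f + 1)%N.

Definition EP (V : finType) (k f : nat) (E : rel V) (region : V -> 'I_k) :
  rel (V * 'I_(ell f)) :=
  fun u w => E u.1 w.1 && ((region u.1 != region w.1) || (u.2 == w.2)).

Definition maj (M : eqType) (s : seq M) : option M :=
  ohead [seq m <- s | size s < 2 * count_mem m s].

(* A scheduling algorithm on G=(V,E) is given by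
   init   : initial state of each node,
   send v w s : message v sends on link (v,w) when in state s,
   update v s rcv x : new state of v from old state s, received messages
     rcv w (Some m for an in-neighbour w, None otherwise), environment input x. *)
Fixpoint execA (V : finType) (S M I : Type) (E : rel V) (init : V -> S)
  (send : V -> V -> S -> M) (update : V -> S -> (V -> option M) -> I -> S)
  (input : nat -> V -> I) (r : nat) : V -> S :=
  match r with
  | 0 => init
  | r'.+1 => fun v =>
      update v (execA E init send update input r' v)
        (fun w => if E w v then Some (send w v (execA E init send update input r' w))
                  else None)
        (input r' v)
  end.

(* Faulty nodes u' send arbitrary messages byz r u' v' (per round and per link).
   Non-faulty v' keeps a local copy of the state of P(v') = v'.1, sends what P(v')
   would send, and updates as P(v') would, using for each in-neighbour w of P(v')
   the majority message among N_{v'}(w) = {w' | P(w') = w, (w',v') in E'}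
   (None = "no message", if no strict majority exists), and input of P(v'). *)
Fixpoint execA' (V : finType) (S : Type) (M : eqType) (I : Type) (k f : nat)
  (E : rel V) (region : V -> 'I_k) (init : V -> S)
  (send : V -> V -> S -> M) (update : V -> S -> (V -> option M) -> I -> S)
  (input : nat -> V -> I) (F' : {set (V * 'I_(ell f))})
  (byz : nat -> V * 'I_(ell f) -> V * 'I_(ell f) -> M)
  (r : nat) : V * 'I_(ell f) -> S :=
  match r with
  | 0 => fun v' => init v'.1
  | r'.+1 => fun v' =>
      update v'.1 (execA' E region init send update input F' byz r' v')
        (fun w =>
           if E w v'.1 then
             maj [seq (if u \in F' then byz r' u v'
                       else send u.1 v'.1
                              (execA' E region init send update input F' byz r' u))
                 | u <- enum [pred u : V * 'I_(ell f) | (u.1 == w) && EP E region u v']]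
           else None)
        (input r' v'.1)
  end.

(* Call a copy (v, i) sound when layer i of v's region contains no faulty
   node; by hypothesis every region has at least f + 1 sound layers.  By
   induction on rounds, every sound copy tracks the fault-free state of v.
   Indeed, for an in-neighbour w of v in the same region, N_{(v,i)}(w) is the
   single copy (w, i), which is sound; for w in another region, N_{(v,i)}(w)
   has at most 2f + 1 members, of which at least f + 1 are sound and hence
   send the correct message, a strict majority.  Since 2(f + 1) > 2f + 1,
   the sound layers of a region are themselves a strict majority of [ell]. *)

From mathcomp Require Import all_boot zify.
From Stdlib Require Import FunctionalExtensionality.

Lemma maj_strict (M : eqType) (s : seq M) (m : M) :
  size s < 2 * count_mem m s -> maj s = Some m.
Proof.
move=> maj_m; rewrite /maj.
have only_m x : size s < 2 * count_mem x s -> x = m.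
  move=> maj_x; apply/eqP/negPn/negP => neq_xm.
  have := count_predUI (pred1 x) (pred1 m) s.
  rewrite (@eq_count _ (predI _ _) pred0) ?count_pred0 ?addn0 => [disj|y /=].
    by have := count_size (predU (pred1 x) (pred1 m)) s; lia.
  by case: eqP => // ->; rewrite (negbTE neq_xm).
have m_in : m \in [seq x <- s | size s < 2 * count_mem x s].
  by rewrite mem_filter maj_m -has_pred1 has_count; lia.
case: [seq x <- s | _] (filter_all (fun x => size s < 2 * count_mem x s) s) m_in
  => //= x t.
by case/andP => /only_m ->.
Qed.

Lemma maj_map_enum (T : finType) (M : eqType) (P Q : pred T) (g : T -> M) (m : M) :
  {in P, forall u, Q u -> g u = m} -> #|P| < 2 * #|[predI P & Q]| ->
  maj [seq g u | u <- enum P] = Some m.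
Proof.
move=> agree maj_PQ; apply: maj_strict.
rewrite size_map -cardE (leq_trans maj_PQ) // leq_mul2l /= count_map.
rewrite cardE /enum_mem size_filter -enumT count_filter.
by apply: sub_count => u /= /andP [Pu Qu]; rewrite agree ?eqxx.
Qed.

Section Simulation.

Set Implicit Arguments.
Unset Strict Implicit.

Variables (V : finType) (E : rel V) (k : nat) (region : V -> 'I_k) (f : nat).
Variables (S : Type) (M : eqType) (I : Type) (init : V -> S).
Variables (send : V -> V -> S -> M) (update : V -> S -> (V -> option M) -> I -> S).
Variables (input : nat -> V -> I) (F' : {set V * 'I_(ell f)}).
Variable (byz : nat -> V * 'I_(ell f) -> V * 'I_(ell f) -> M).

Local Notation exec := (execA E init send update input).
Local Notation exec' := (execA' E region init send update input F' byz).

Definition fault_free_copies (c : 'I_k) : {set 'I_(ell f)} :=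
  [set i | [forall v, (region v == c) ==> ((v, i) \notin F')]].

Hypothesis enough_fault_free_copies : forall c, f + 1 <= #|fault_free_copies c|.

Definition sound_copy (u : V * 'I_(ell f)) : bool :=
  u.2 \in fault_free_copies (region u.1).

Definition nbhd_copies (w : V) (v' : V * 'I_(ell f)) : pred (V * 'I_(ell f)) :=
  [pred u | (u.1 == w) && EP E region u v'].

Lemma sound_copy_nonfaulty u : sound_copy u -> u \notin F'.
Proof. by case: u => v i; rewrite /sound_copy inE => /forallP /(_ v); rewrite eqxx. Qed.

Lemma card_nbhd_copies_le w v' : #|nbhd_copies w v'| <= ell f.
Proof.
rewrite -[X in _ <= X]card_ord.
apply: leq_trans (leq_imset_card (pair w) 'I_(ell f)).
apply/subset_leq_card/subsetP => -[w' j] /andP [/= /eqP -> _].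
exact: imset_f.
Qed.

Lemma nbhd_copies_same_region w v i :
  E w v -> region w = region v -> nbhd_copies w (v, i) =i pred1 (w, i).
Proof.
move=> Ewv same_region [w' j]; rewrite !inE /EP xpair_eqE /=.
by case: eqP => [-> | //]; rewrite Ewv same_region eqxx.
Qed.

Lemma nbhd_copies_cross_region w v i j :
  E w v -> region w != region v -> (w, j) \in nbhd_copies w (v, i).
Proof. by move=> Ewv cross; rewrite !inE /EP /= eqxx Ewv cross. Qed.

Lemma nbhd_copies_sound_majority w v i :
  E w v -> sound_copy (v, i) ->
  #|nbhd_copies w (v, i)| < 2 * #|[predI nbhd_copies w (v, i) & sound_copy]|.
Proof.
move=> Ewv sound_vi; have [same | cross] := eqVneq (region w) (region v).
  have sound_wi : sound_copy (w, i) by rewrite /sound_copy same.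
  have nbhd_wi := nbhd_copies_same_region i Ewv same.
  rewrite (eq_card1 nbhd_wi) (@eq_card1 _ (w, i)) // => u.
  by rewrite inE /= nbhd_wi inE; case: eqP => [->|].
have : #|fault_free_copies (region w)| <= #|[predI nbhd_copies w (v, i) & sound_copy]|.
  rewrite -(card_imset _ (@can_inj _ _ (pair w) snd (fun _ => erefl))).
  apply/subset_leq_card/subsetP => _ /imsetP [j good_j ->].
  by rewrite inE nbhd_copies_cross_region.
have := card_nbhd_copies_le w (v, i).
have := enough_fault_free_copies (region w); rewrite /ell; lia.
Qed.

Lemma execA'_sound r u : sound_copy u -> exec' r u = exec r u.1.
Proof.
elim: r u => [//|r IH] [v i] /= sound_vi.
rewrite IH //; congr update; apply: functional_extensionality => w.
case: ifP => // Ewv.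
apply: maj_map_enum (nbhd_copies_sound_majority Ewv sound_vi) => u.
move=> /andP [/eqP uw _] sound_u.
by rewrite (negbTE (sound_copy_nonfaulty sound_u)) IH // uw.
Qed.

End Simulation.

Theorem lemma8 (V : finType) (E : rel V) (k : nat) (region : V -> 'I_k)
  (f : nat) (S : Type) (M : eqType) (I : Type)
  (init : V -> S) (send : V -> V -> S -> M)
  (update : V -> S -> (V -> option M) -> I -> S)
  (input : nat -> V -> I)
  (F' : {set (V * 'I_(ell f))})
  (byz : nat -> V * 'I_(ell f) -> V * 'I_(ell f) -> M) :
  (forall k' : 'I_k,
     f + 1 <= #|[set i : 'I_(ell f) |
                 [forall v : V, (region v == k') ==> ((v, i) \notin F')]]|) ->
  forall v : V,
    exists Idx : {set 'I_(ell f)},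
      ell f < 2 * #|Idx| /\
      forall i, i \in Idx ->
        (v, i) \notin F' /\
        forall r : nat,
          execA' E region init send update input F' byz r (v, i) =
          execA E init send update input r v.
Proof.
move=> enough_fault_free_sets v.
have enough_fault_free c : f + 1 <= #|fault_free_copies region F' c|.
  exact: enough_fault_free_sets.
exists (fault_free_copies region F' (region v)); split.
  by have := enough_fault_free (region v); rewrite /ell; lia.
move=> i sound_vi; split; first exact: (@sound_copy_nonfaulty _ _ region _ F' (v, i)).
by move=> r; apply: (execA'_sound _ _ _ _ _ _ enough_fault_free r (u := (v, i))).
Qed.
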